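(* Let $\varphi\colon G\twoheadrightarrow Q$ be an epimorphism from a finitely generated group $G$ to a group $Q$, and let $\varphi^*\colon H^1(Q,\mathbb{Q})\hookrightarrow H^1(G,\mathbb{Q})$ be the induced monomorphism. Then for each $r\ge1$ the induced map $\varphi^*_r\colon\operatorname{Grass}_r(H^1(Q,\mathbb{Q}))\hookrightarrow\operatorname{Grass}_r(H^1(G,\mathbb{Q}))$ maps $\operatorname{Grass}_r(H^1(Q,\mathbb{Q}))\setminus\Omega^1_r(Q)$ into $\operatorname{Grass}_r(H^1(G,\mathbb{Q}))\setminus\Omega^1_r(G)$.
   Context: For a finitely generated group $H$ and an epimorphism $\nu\colon H\twoheadrightarrow\mathbb{Z}^r$, let $P_\nu=\operatorname{im}(\nu^*\colon\mathbb{Q}^r\to H^1(H,\mathbb{Q}))$; every rational $r$-plane in $H^1(H,\mathbb{Q})$ is of this form. The Dwyer–Fried sets of $H$ are $\Omega^i_r(H)=\{P_\nu\in\operatorname{Grass}_r(H^1(H,\mathbb{Q}))\mid b_j(\ker\nu)<\infty\ \text{for all } j\le i\}$, where $b_j$ denotes the $j$-th rational Betti number of the group (equivalently of the $\mathbb{Z}^r$-cover of $K(H,1)$ determined by $\nu$); by convention this is empty if $r>b_1(H)$. *)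

(* groups are given as an explicit record,
   since MathComp has no theory of possibly-infinite groups. *)
From HB Require Import structures.
From mathcomp Require Import all_boot all_order all_algebra.
From Stdlib Require List.
Set Implicit Arguments. Unset Strict Implicit. Unset Printing Implicit Defensive.
Import Order.TTheory GRing.Theory Num.Theory.
Local Open Scope ring_scope.

Record grp := Grp {
  car :> Type;
  gmul : car -> car -> car;
  gone : car;
  ginv : car -> car;
  gmulA : forall x y z, gmul x (gmul y z) = gmul (gmul x y) z;
  gmul1l : forall x, gmul gone x = x;
  gmulVl : forall x, gmul (ginv x) x = gone
}.

Definition gzpow (G : grp) (x : G) (z : int) : G :=
  match z with
  | Posz n => iter n (gmul x) (gone G)
  | Negz n => iter n.+1 (gmul (ginv x)) (gone G)
  end.

Definition gprod (G : grp) (w : seq G) : G := foldr (@gmul G) (gone G) w.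

Definition is_hom (G H : grp) (f : G -> H) : Prop :=
  forall x y, f (gmul x y) = gmul (f x) (f y).

Definition is_epi (G H : grp) (f : G -> H) : Prop :=
  is_hom f /\ forall y : H, exists x : G, f x = y.

Definition fin_gen (G : grp) : Prop :=
  exists s : seq G, forall g : G, exists w : seq G,
    (forall x, List.In x w -> List.In x s \/ List.In (ginv x) s) /\ g = gprod w.

(* additive homomorphisms to Q : the elements of H^1(G, Q) = Hom(G, Q) *)
Definition H1hom (G : grp) (chi : G -> rat) : Prop :=
  forall x y, chi (gmul x y) = chi x + chi y.

(* an epimorphism nu : G ->> Z^r, given by its r coordinate homomorphisms *)
Definition epiZr (G : grp) (r : nat) (nu : 'I_r -> G -> int) : Prop :=
  (forall i x y, nu i (gmul x y) = nu i x + nu i y) /\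
  (forall v : 'I_r -> int, exists x : G, forall i, nu i x = v i).

Definition ker_nu (G : grp) (r : nat) (nu : 'I_r -> G -> int) (x : G) : Prop :=
  forall i, nu i x = 0.

Definition in_comm (G : grp) (K : G -> Prop) (x : G) : Prop :=
  exists ps : seq (G * G),
    (forall p, List.In p ps -> K p.1 /\ K p.2) /\
    x = gprod [seq gmul (ginv p.1) (gmul (ginv p.2) (gmul p.1 p.2)) | p <- ps].

(* b_1(K) = dim_Q H_1(K; Q) = dim_Q (K^ab (x) Q) < infinity, for a subgroup K:
   there are finitely many k_1..k_n in K whose classes span K^ab (x) Q, i.e.
   every k in K satisfies k^m * prod k_i^(a_i) in [K,K] for some m >= 1, a_i in Z. *)
Definition betti1_finite (G : grp) (K : G -> Prop) : Prop :=
  exists ks : seq G, (forall k, List.In k ks -> K k) /\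
    forall k, K k -> exists (m : nat) (a : seq int),
      (0 < m)%N /\ size a = size ks /\
      in_comm K (gmul (gzpow k (Posz m))
                      (gprod [seq gzpow p.1 p.2 | p <- zip ks a])).

(* b_0(K) = dim_Q H_0(K; Q) = 1 is always finite. *)
Definition betti0_finite (G : grp) (K : G -> Prop) : Prop := True.

Definition plane (G : grp) := (G -> rat) -> Prop.

(* P_nu = image of nu^* : Q^r -> H^1(G, Q) *)
Definition P_nu (G : grp) (r : nat) (nu : 'I_r -> G -> int) : plane G :=
  fun chi => exists q : 'I_r -> rat,
    forall x, chi x = \sum_(i < r) q i * (nu i x)%:~R.

Definition same_plane (G : grp) (P P' : plane G) : Prop :=
  forall chi, P chi <-> P' chi.

(* Grass_r(H^1(G,Q)): r-dimensional Q-linear subspaces of H^1(G,Q),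
   i.e. spans of r linearly independent homomorphisms G -> Q. *)
Definition span_of (G : grp) (r : nat) (chis : 'I_r -> G -> rat) : plane G :=
  fun chi => exists q : 'I_r -> rat,
    forall x, chi x = \sum_(i < r) q i * chis i x.

Definition in_Grass (G : grp) (r : nat) (P : plane G) : Prop :=
  exists chis : 'I_r -> G -> rat,
    (forall i, H1hom (chis i)) /\
    (forall q : 'I_r -> rat,
        (forall x, \sum_(i < r) q i * chis i x = 0) -> forall i, q i = 0) /\
    same_plane P (span_of chis).

(* Dwyer-Fried set Omega^i_r(G) for i = 1 (empty if r > b_1(G),
   automatically, since then no epimorphism G ->> Z^r exists). *)
Definition Omega1 (G : grp) (r : nat) (P : plane G) : Prop :=
  in_Grass r P /\
  exists nu : 'I_r -> G -> int, epiZr nu /\ same_plane P (P_nu nu) /\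
    betti0_finite (ker_nu nu) /\ betti1_finite (ker_nu nu).

Definition pullback_plane (G Q : grp) (phi : G -> Q) (P : plane Q) : plane G :=
  fun psi => exists chi, P chi /\ forall g, psi g = chi (phi g).

(* Pulling back along phi, chi |-> chi o phi, is injective on H^1 because phi
   is onto, so phi^* maps r-planes of H^1(Q, Q) to r-planes of H^1(G, Q).  For
   the Omega^1 part we prove the contrapositive: suppose phi^* P = P_nu for an
   epimorphism nu : G ->> Z^r with b_1(ker nu) finite.  Each coordinate nu_i
   lies in P_nu = phi^* P, hence factors as nu_i = nu'_i o phi.  Then
   - nu' : Q ->> Z^r is again an epimorphism and phi^* P_nu' = P_nu, so
     P = P_nu' by injectivity of phi^* on planes;
   - phi maps ker nu onto ker nu', and finiteness of b_1 descends along a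
     surjective homomorphism of subgroups (images of a spanning family of the
     abelianization still span, and commutators map to commutators). *)
From HB Require Import structures.
From mathcomp Require Import all_boot all_order all_algebra.
From Stdlib Require Import ClassicalEpsilon FunctionalExtensionality.
From Stdlib Require List.
Import GRing.Theory.
Local Open Scope ring_scope.

Lemma gmulVr (H : grp) (x : H) : gmul x (ginv x) = gone H.
Proof.
set y := gmul x (ginv x).
have yy : gmul y y = y by rewrite /y -gmulA [gmul (ginv x) _]gmulA gmulVl gmul1l.
have -> : y = gmul (gmul (ginv y) y) y by rewrite gmulVl gmul1l.
by rewrite -gmulA yy gmulVl.
Qed.

Lemma gmul1r (H : grp) (x : H) : gmul x (gone H) = x.
Proof. by rewrite -(gmulVl x) gmulA gmulVr gmul1l. Qed.

Section Homomorphism.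
Variables (G H : grp) (phi : G -> H).
Hypothesis hphi : is_hom phi.

Lemma hom1 : phi (gone G) = gone H.
Proof.
have E : phi (gone G) = gmul (phi (gone G)) (phi (gone G)).
  by rewrite -hphi gmul1l.
have := congr1 (gmul (ginv (phi (gone G)))) E.
by rewrite gmulA !gmulVl gmul1l => <-.
Qed.

Lemma homV (x : G) : phi (ginv x) = ginv (phi x).
Proof.
have E : gmul (phi (ginv x)) (phi x) = gone H by rewrite -hphi gmulVl hom1.
by rewrite -[phi (ginv x)]gmul1r -(@gmulVr _ (phi x)) gmulA E gmul1l.
Qed.

Lemma hom_zpow (x : G) (z : int) : phi (gzpow x z) = gzpow (phi x) z.
Proof.
have hom_iter n (y w : G) : phi (iter n (gmul y) w) = iter n (gmul (phi y)) (phi w).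
  by elim: n => //= n IH; rewrite hphi IH.
by case: z => n /=; rewrite ?hphi hom_iter ?homV hom1.
Qed.

Lemma hom_prod (w : seq G) : phi (gprod w) = gprod (map phi w).
Proof. by elim: w => [|a w IH] /=; [rewrite hom1 | rewrite hphi IH]. Qed.

Lemma hom_prod_zpow (ks : seq G) (a : seq int) :
  phi (gprod [seq gzpow p.1 p.2 | p <- zip ks a]) =
  gprod [seq gzpow p.1 p.2 | p <- zip (map phi ks) a].
Proof.
elim: ks a => [|k ks IH] [|b a] /=; rewrite ?hom1 //.
by rewrite hphi hom_zpow IH.
Qed.

Lemma hom_comm (K : G -> Prop) (K' : H -> Prop) (x : G) :
  (forall k, K k -> K' (phi k)) -> in_comm K x -> in_comm K' (phi x).
Proof.
move=> hK [ps [hps ->]].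
exists (map (fun p => (phi p.1, phi p.2)) ps); split.
  by move=> p /List.in_map_iff [q [<- /hps [h1 h2]]]; split; apply: hK.
rewrite hom_prod -!map_comp; congr gprod; apply: eq_map => p /=.
by rewrite !hphi !homV.
Qed.

Lemma betti1_finite_image (K : G -> Prop) (K' : H -> Prop) :
  (forall k, K k -> K' (phi k)) ->
  (forall k', K' k' -> exists2 k, K k & phi k = k') ->
  betti1_finite K -> betti1_finite K'.
Proof.
move=> hKK' hsurj [ks [hks hspan]].
exists (map phi ks); split.
  by move=> k /List.in_map_iff [k0 [<- /hks]]; apply: hKK'.
move=> k' /hsurj [k hk <-].
have [m [a [hm [hsz hc]]]] := hspan k hk.
exists m, a; do 2!split=> //; first by rewrite size_map.
rewrite -hom_zpow -hom_prod_zpow -hphi.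
exact: hom_comm hKK' hc.
Qed.

End Homomorphism.

Section Epimorphism.
Variables (G Q : grp) (phi : G -> Q).
Hypothesis hphi : is_hom phi.
Hypothesis phi_onto : forall y : Q, exists x : G, phi x = y.

(* phi^* sends an r-plane of H^1(Q, Q) to an r-plane of H^1(G, Q): a basis
   chi_i pulls back to the basis chi_i o phi, which stays independent since
   phi is onto. *)
Lemma pullback_in_Grass (r : nat) (P : plane Q) :
  in_Grass r P -> in_Grass r (pullback_plane phi P).
Proof.
case=> chis [hhom [hind hspan]].
exists (fun i x => chis i (phi x)); split; [|split].
- by move=> i x y; rewrite /= hphi hhom.
- move=> q hq i; apply: hind => y; have [x <-] := phi_onto y; exact: hq.
- move=> psi; split.
    by move=> [chi [/hspan [q hq] hpsi]]; exists q => x; rewrite hpsi hq.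
  move=> [q hq]; exists (fun y => \sum_(i < r) q i * chis i y); split=> //.
  by apply/hspan; exists q.
Qed.

(* phi^* is injective on planes, since chi o phi determines chi. *)
Lemma pullback_same_plane (P P' : plane Q) :
  same_plane (pullback_plane phi P) (pullback_plane phi P') -> same_plane P P'.
Proof.
have half (A B : plane Q) :
    same_plane (pullback_plane phi A) (pullback_plane phi B) ->
    forall c, A c -> B c.
  move=> hAB c hc.
  have [|c' [hc' ec]] := (hAB (fun x => c (phi x))).1; first by exists c.
  suff -> : c = c' by [].
  by apply: functional_extensionality => y; have [x <-] := phi_onto y.
by move=> hPP' c; split; apply: half => // psi; split => /hPP'.
Qed.

Lemma pullback_P_nu (r : nat) (nu' : 'I_r -> Q -> int) :
  same_plane (pullback_plane phi (P_nu nu')) (P_nu (fun i x => nu' i (phi x))).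
Proof.
move=> psi; split.
  by move=> [chi [[q hq] hpsi]]; exists q => x; rewrite hpsi hq.
move=> [q hq]; exists (fun y => \sum_(i < r) q i * (nu' i y)%:~R).
by split=> //; exists q.
Qed.

Lemma epiZr_descent (r : nat) (nu' : 'I_r -> Q -> int) :
  epiZr (fun i x => nu' i (phi x)) -> epiZr nu'.
Proof.
move=> [hadd honto]; split.
  move=> i y1 y2; have [x1 <-] := phi_onto y1; have [x2 <-] := phi_onto y2.
  by rewrite -hphi hadd.
by move=> v; have [x hx] := honto v; exists (phi x).
Qed.

Lemma P_nu_factor (r : nat) (P : plane Q) (nu : 'I_r -> G -> int) :
  (forall psi, P_nu nu psi -> pullback_plane phi P psi) ->
  exists nu' : 'I_r -> Q -> int, nu = fun i x => nu' i (phi x).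
Proof.
move=> hsub.
have hchi (i : 'I_r) : exists chi : Q -> rat,
    forall x, (nu i x)%:~R = chi (phi x).
  have [|chi [_ hc]] := hsub (fun x => (nu i x)%:~R); last by exists chi.
  exists (fun j => (j == i)%:R) => x.
  rewrite (bigD1 i) //= eqxx mul1r big1 ?addr0 // => j /negbTE ->.
  by rewrite mul0r.
pose chi i := proj1_sig (constructive_indefinite_description _ (hchi i)).
have chiP i x : (nu i x)%:~R = chi i (phi x).
  exact: (proj2_sig (constructive_indefinite_description _ (hchi i))).
exists (fun i y => numq (chi i y)).
apply: functional_extensionality_dep => i; apply: functional_extensionality => x.
by rewrite -chiP numq_int.
Qed.

Lemma Omega1_descent (r : nat) (P : plane Q) :
  in_Grass r P -> Omega1 r (pullback_plane phi P) -> Omega1 r P.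
Proof.
move=> hP [_ [nu [hepi [hsame [_ hb1]]]]].
have [nu' def_nu] := @P_nu_factor r P nu (fun psi => (hsame psi).2).
subst nu; split=> //; exists nu'.
split; first exact: epiZr_descent.
split.
  apply: pullback_same_plane => psi.
  by rewrite (hsame psi) (@pullback_P_nu r nu' psi).
split=> //; apply: (@betti1_finite_image _ _ phi hphi _ _ _ _ hb1) => [k hk | k' hk'].
- exact: hk.
- by have [k ek] := phi_onto k'; exists k => // i; rewrite ek.
Qed.

End Epimorphism.

Theorem proposition4p13 (G Q : grp) (phi : G -> Q) :
  fin_gen G -> is_epi phi ->
  forall r : nat, (1 <= r)%N ->
  forall P : plane Q, in_Grass r P -> ~ Omega1 r P ->
    in_Grass r (pullback_plane phi P) /\ ~ Omega1 r (pullback_plane phi P).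
Proof.
move=> _ [hphi phi_onto] r _ P hP notOmega; split.
- exact: pullback_in_Grass.
- by move=> /(@Omega1_descent _ _ phi hphi phi_onto r P hP).
Qed.
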